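(* Let $\Gamma$ be a Neumaier graph with parameters $(n,k,\lambda;a,c)$. If $\lambda=0$, then $c=2$, $a=1$, and $\Gamma$ is the complete bipartite graph $K_{k,k}$. Moreover, if $c=2$, then $a=1$, $\lambda=0$, and $\Gamma$ is the complete bipartite graph $K_{k,k}$.
   Context: All graphs are finite, simple, undirected and connected. A graph is edge-regular with parameters $(n,k,\lambda)$ if it has $n$ vertices, is $k$-regular, and any two adjacent vertices have exactly $\lambda$ common neighbours. A clique $C$ is a regular clique with nexus $a$ if every vertex not in $C$ has exactly $a$ neighbours in $C$. A Neumaier graph is a non-complete edge-regular graph containing a regular clique; in a Neumaier graph all regular cliques have the same size $c$ and the same nexus $a$, and the graph is said to have parameters $(n,k,\lambda;a,c)$ if it is edge-regular with parameters $(n,k,\lambda)$ and contains a regular clique of size $c$ with nexus $a$. *)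

From mathcomp Require Import all_boot.
Set Implicit Arguments. Unset Strict Implicit. Unset Printing Implicit Defensive.

Definition simple_graph (T : finType) (e : rel T) : Prop :=
  symmetric e /\ irreflexive e.

Definition connected_graph (T : finType) (e : rel T) : Prop :=
  forall x y : T, connect e x y.

Definition complete_graph (T : finType) (e : rel T) : Prop :=
  forall x y : T, x != y -> e x y.

Definition nbhd (T : finType) (e : rel T) (x : T) : {set T} := [set y | e x y].

Definition edge_regular (T : finType) (e : rel T) (n k lambda : nat) : Prop :=
  #|T| = n /\
  (forall x : T, #|nbhd e x| = k) /\
  (forall x y : T, e x y -> #|nbhd e x :&: nbhd e y| = lambda).

Definition is_clique (T : finType) (e : rel T) (C : {set T}) : Prop :=
  0 < #|C| /\ {in C &, forall x y, x != y -> e x y}.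

Definition regular_clique (T : finType) (e : rel T) (C : {set T}) (a : nat) : Prop :=
  is_clique e C /\ forall x : T, x \notin C -> #|nbhd e x :&: C| = a.

Definition neumaier_params (T : finType) (e : rel T) (n k lambda a c : nat) : Prop :=
  simple_graph e /\ connected_graph e /\ ~ complete_graph e /\
  edge_regular e n k lambda /\
  exists C : {set T}, regular_clique e C a /\ #|C| = c.

Definition is_K_kk (T : finType) (e : rel T) (k : nat) : Prop :=
  exists A : {set T}, #|A| = k /\ #|~: A| = k /\
    forall x y : T, e x y = ((x \in A) != (y \in A)).

(* A regular clique C with nexus a in a connected, non-complete, k-regular
   graph satisfies 0 < a < #|C|: nexus 0 would make C closed under adjacency,
   hence everything, and nexus #|C| would make every vertex of C adjacent to
   all other vertices, which by regularity forces the graph to be complete.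
   If lambda = 0 the graph is triangle-free, so cliques have at most two
   vertices and c = 2, a = 1.  Conversely, when c = 2 and a = 1, a common
   neighbour of the edge C = {x, y} would have two neighbours in C, so
   lambda = 0; every vertex is adjacent to x or to y, and triangle-freeness
   plus regularity make N(y) and its complement N(x) the two sides of K_{k,k}. *)
From mathcomp Require Import all_boot.
From mathcomp Require Import zify.

Set Implicit Arguments.
Unset Strict Implicit.
Unset Printing Implicit Defensive.

Section SimpleGraph.

Variables (T : finType) (e : rel T) (k : nat).
Hypotheses (e_sym : symmetric e) (e_irr : irreflexive e).
Hypothesis e_regular : forall x, #|nbhd e x| = k.

Lemma in_nbhd x y : (y \in nbhd e x) = e x y.
Proof. by rewrite inE. Qed.

Lemma nbhd_sub_setC1 x : nbhd e x \subset [set~ x].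
Proof. by apply/subsetP => y; rewrite !inE; apply: contraTneq => ->; rewrite e_irr. Qed.

Lemma regular_dominating_complete x : nbhd e x = [set~ x] -> complete_graph e.
Proof.
move=> Nx p q pq.
have Np : nbhd e p = [set~ p].
  by apply/eqP; rewrite eqEcard nbhd_sub_setC1 cardsC1 e_regular -(e_regular x) Nx cardsC1 leqnn.
by rewrite -[e p q]in_nbhd Np !inE eq_sym.
Qed.

Lemma exists_notin_clique {C : {set T}} :
  ~ complete_graph e -> is_clique e C -> exists z, z \notin C.
Proof.
move=> ncomp [_ Ccl]; case: (pickP [predC C]) => [z zC | allC]; first by exists z.
by case: ncomp => p q; apply: Ccl; apply/negbFE; apply: allC.
Qed.

Lemma regular_clique_nexus_lt_card (C : {set T}) a :
  ~ complete_graph e -> regular_clique e C a -> a < #|C|.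
Proof.
move=> ncomp [/[dup] Cclique [C_gt0 Ccl] nexus]; have [x xC] := card_gt0P C_gt0.
have [z zC] := exists_notin_clique ncomp Cclique.
have a_le : a <= #|C| by rewrite -(nexus z zC) subset_leq_card ?subsetIr.
rewrite ltn_neqAle a_le andbT.
apply: contra_notN ncomp => /eqP full; apply: (regular_dominating_complete (x := x)).
apply/eqP; rewrite eqEsubset nbhd_sub_setC1; apply/subsetP => w; rewrite !inE => wx.
have [wC | wC] := boolP (w \in C); first by apply: Ccl; rewrite // eq_sym.
have CNw : C \subset nbhd e w.
  by apply/setIidPr/eqP; rewrite eqEcard subsetIr nexus // full leqnn.
by rewrite e_sym -[e w x]in_nbhd (subsetP CNw).
Qed.

Lemma regular_clique_nexus_gt0 (C : {set T}) a :
  connected_graph e -> ~ complete_graph e -> regular_clique e C a -> 0 < a.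
Proof.
move=> conn ncomp [/[dup] Cclique [C_gt0 _] nexus]; have [x xC] := card_gt0P C_gt0.
have [z zC] := exists_notin_clique ncomp Cclique.
rewrite lt0n; apply/negP => /eqP a0.
have stay_in_C p q : e p q -> p \in C -> q \in C.
  move=> epq pC; apply: contraT => qC.
  have /eqP := nexus q qC; rewrite a0 cards_eq0 => /eqP/setP/(_ p).
  by rewrite !inE e_sym epq pC.
have C_closed : closed e C.
  by move=> p q epq; apply/idP/idP; apply: stay_in_C; rewrite // e_sym.
by have := closed_connect C_closed (conn x z); rewrite xC (negbTE zC).
Qed.

Lemma pair_regular_clique_cover x y a :
  x != y -> regular_clique e [set x; y] a -> 0 < a -> forall z, e x z || e y z.
Proof.
move=> xy [[_ Ccl] nexus] a_gt0 z.
have [zC | zC] := boolP (z \in [set x; y]).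
  have exy : e x y by apply: Ccl; rewrite ?inE ?eqxx ?orbT.
  by move: zC; rewrite !inE => /orP [/eqP -> | /eqP ->]; rewrite ?exy // e_sym exy orbT.
move: a_gt0; rewrite -(nexus z zC) => /card_gt0P [t].
by rewrite !inE => /andP [ezt /orP [/eqP tx | /eqP ty]]; subst t; rewrite -!(e_sym z) ezt ?orbT.
Qed.

Lemma pair_regular_clique_nexus1_nbhdI x y :
  x != y -> regular_clique e [set x; y] 1 -> nbhd e x :&: nbhd e y = set0.
Proof.
move=> xy [_ nexus]; apply/setP => w; rewrite !inE; apply/negbTE/negP => /andP [exw eyw].
have wC : w \notin [set x; y].
  rewrite !inE; apply/norP; split.
    by apply: contraTneq exw => ->; rewrite e_irr.
  by apply: contraTneq eyw => ->; rewrite e_irr.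
have := nexus w wC.
have -> : nbhd e w :&: [set x; y] = [set x; y].
  by apply/setIidPr/subsetP => t; rewrite !inE => /orP [/eqP -> | /eqP ->]; rewrite e_sym.
by rewrite cards2 xy.
Qed.

Section TriangleFree.

Hypothesis e_triangle_free : forall x y, e x y -> #|nbhd e x :&: nbhd e y| = 0.

Lemma nbhd_sub_setC {x y} : e x y -> nbhd e x \subset ~: nbhd e y.
Proof. by move=> exy; rewrite -disjoints_subset -setI_eq0 -cards_eq0 e_triangle_free. Qed.

Lemma triangle_free_clique_card_le2 (C : {set T}) : is_clique e C -> #|C| <= 2.
Proof.
move=> [C_gt0 Ccl]; have [x xC] := card_gt0P C_gt0.
rewrite (cardsD1 x) xC ltnS; apply/card_le1_eqP => y w.
rewrite !inE => /andP [yx yC] /andP [wx wC]; apply/eqP; apply: contraT => yw.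
have exy : e x y by apply: Ccl; rewrite // eq_sym.
have exw : e x w by apply: Ccl; rewrite // eq_sym.
have eyw : e y w by apply: Ccl; rewrite // eq_sym.
by have := subsetP (nbhd_sub_setC exy) w; rewrite !inE exw eyw => /(_ isT).
Qed.

Lemma nbhd_eq_setC {x y} : e x y -> #|~: nbhd e y| = k -> nbhd e x = ~: nbhd e y.
Proof. by move=> exy Ny; apply/eqP; rewrite eqEcard nbhd_sub_setC // e_regular Ny leqnn. Qed.

Lemma triangle_free_K_kk x y :
  e x y -> (forall z, e x z || e y z) -> is_K_kk e k.
Proof.
move=> exy cover_xy.
have Nx : nbhd e x = ~: nbhd e y.
  apply/eqP; rewrite eqEsubset nbhd_sub_setC //; apply/subsetP => z.
  by rewrite !inE => /negbTE eyz; have := cover_xy z; rewrite eyz orbF.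
have NyC : #|~: nbhd e y| = k by rewrite -Nx.
have NxC : #|~: nbhd e x| = k by rewrite Nx setCK.
exists (nbhd e y); split=> //; split=> // u v; rewrite -in_nbhd.
have [uNy | uNx] := boolP (u \in nbhd e y).
  have euy : e u y by rewrite e_sym -in_nbhd.
  by rewrite (nbhd_eq_setC euy) // inE; case: (v \in nbhd e y).
have eux : e u x by rewrite e_sym -in_nbhd Nx inE.
by rewrite (nbhd_eq_setC eux) // Nx setCK; case: (v \in nbhd e y).
Qed.

End TriangleFree.

End SimpleGraph.

Theorem lemma3p1 (T : finType) (e : rel T) (n k lambda a c : nat) :
  neumaier_params e n k lambda a c ->
  (lambda = 0 -> c = 2 /\ a = 1 /\ is_K_kk e k) /\
  (c = 2 -> a = 1 /\ lambda = 0 /\ is_K_kk e k).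
Proof.
move=> [[e_sym e_irr] [conn [ncomp [[_ [e_reg e_lam]] [C [Creg cardC]]]]]].
have a_gt0 : 0 < a by apply: regular_clique_nexus_gt0 Creg.
have a_lt_c : a < c by rewrite -cardC; apply: regular_clique_nexus_lt_card Creg.
have pair_case : c = 2 -> a = 1 /\ lambda = 0 /\ is_K_kk e k.
  move=> c2; have a1 : a = 1 by lia.
  have /cards2P [x [y [xy CE]]] : #|C| == 2 by rewrite cardC c2.
  rewrite CE a1 in Creg.
  have exy : e x y by case: Creg => [[_ Ccl] _]; apply: Ccl; rewrite ?inE ?eqxx ?orbT.
  have lam0 : lambda = 0.
    by rewrite -(e_lam x y exy) (pair_regular_clique_nexus1_nbhdI e_sym e_irr xy Creg) cards0.
  split=> //; split=> //; apply: (triangle_free_K_kk e_sym e_reg _ exy).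
    by move=> u v euv; rewrite e_lam.
  exact: (pair_regular_clique_cover e_sym xy Creg).
split=> [lam0 | //]; have c_le2 : c <= 2.
  rewrite -cardC; apply: triangle_free_clique_card_le2 Creg.1.
  by move=> u v euv; rewrite e_lam.
have c2 : c = 2 by lia.
by have [a1 [_ Kkk]] := pair_case c2.
Qed.
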